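(* Let $q\ge 2$ and let $D$ be a directed graph on $n$ vertices which has an induced acyclic subgraph on $I$ vertices. If $$(n-I)\left(\frac{q}{q-1}\right)^{I} < q,$$ then $D$ is not $q$-solvable.
   Context: A directed graph $D=(V,E)$ has arcs $E \subseteq \{(u,v)\in V^2 : u \neq v\}$ (bidirectional pairs allowed). An induced subgraph is acyclic if it contains no directed cycle. $N^-(v)=\{u:(u,v)\in E\}$. For $q\ge2$ let $[q]=\{0,\dots,q-1\}$. A $D$-function over $[q]$ is a map $f=(f_v)_{v\in V}:[q]^V\to[q]^V$ with each $f_v(x)$ depending only on $(x_u)_{u\in N^-(v)}$. $D$ is $q$-solvable if some $D$-function $f$ over $[q]$ has the property that for every $x\in[q]^V$ there is $v$ with $f_v(x)=x_v$. *)

From mathcomp Require Import all_boot all_order all_algebra.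
Set Implicit Arguments. Unset Strict Implicit. Unset Printing Implicit Defensive.

(* A digraph on a finite vertex type V is given by an arc relation e : rel V
   (e u v = arc (u,v)); loops are excluded by the hypothesis [irreflexive e]. *)

Definition in_nbr (V : finType) (e : rel V) (v : V) : {set V} := [set u | e u v].

(* A directed cycle inside S: a nonempty closed walk x :: p (x -> ... -> last -> x)
   all of whose vertices lie in S. *)
Definition has_cycle_in (V : finType) (e : rel V) (S : {set V}) : Prop :=
  exists (x : V) (p : seq V), cycle e (x :: p) /\ all (fun y => y \in S) (x :: p).

Definition induced_acyclic (V : finType) (e : rel V) (S : {set V}) : Prop :=
  ~ has_cycle_in e S.

Definition is_D_function (V : finType) (e : rel V) (q : nat)
  (f : V -> {ffun V -> 'I_q} -> 'I_q) : Prop :=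
  forall (v : V) (x y : {ffun V -> 'I_q}),
    (forall u, u \in in_nbr e v -> x u = y u) -> f v x = f v y.

Definition q_solvable (V : finType) (e : rel V) (q : nat) : Prop :=
  exists f : V -> {ffun V -> 'I_q} -> 'I_q,
    is_D_function e f /\ forall x : {ffun V -> 'I_q}, exists v, f v x = x v.

From mathcomp Require Import all_boot all_order all_algebra zify.
Import GRing.Theory Num.Theory.
Set Implicit Arguments. Unset Strict Implicit. Unset Printing Implicit Defensive.

(* Fix a D-function f over [q] and call x a fixed point of f at v when
   f_v(x) = x_v.  For a vertex set T let unfixed_on T be the configurations
   fixed at no vertex of T.  If T induces an acyclic subgraph it has a sink w
   (no arc from w into T); then neither f_w nor membership in unfixed_on (T\w)
   depends on the coordinate x_w, so exactly a fraction (q-1)/q of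
   unfixed_on (T\w) lies in unfixed_on T.  By induction
   |unfixed_on T| = q^n ((q-1)/q)^|T|.  If f solves D, every configuration in
   unfixed_on S is fixed at some vertex outside S, and each of the n-|S| sets
   fixed_at v has q^(n-1) elements, so q^n ((q-1)/q)^|S| <= (n-|S|) q^(n-1),
   contradicting the hypothesis. *)

Section CoordinateUpdate.
Variables (V R : finType).
Local Notation X := {ffun V -> R}.

Definition upd (x : X) (w : V) (k : R) : X := [ffun u => if u == w then k else x u].

Lemma upd_upd x w a b : upd (upd x w a) w b = upd x w b.
Proof. by apply/ffunP => u; rewrite !ffunE; case: eqP. Qed.

Lemma upd_id x w : upd x w (x w) = x.
Proof. by apply/ffunP => u; rewrite !ffunE; case: eqP => [->|]. Qed.

Lemma upd_at x w k : upd x w k w = k.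
Proof. by rewrite ffunE eqxx. Qed.

Definition indep_of (T : Type) (w : V) (g : X -> T) : Prop :=
  forall x k, g (upd x w k) = g x.

(* If P and g ignore the coordinate w, the configurations of P with g x = x w
   are a 1/|R| fraction of P: x |-> (x with x w := g x, x w) is a bijection
   from P onto that subset times R. *)
Lemma card_fixed_coord (P : {set X}) (g : X -> R) (w : V) :
  indep_of w (fun x => x \in P) -> indep_of w g ->
  #|P| = #|[set x in P | g x == x w]| * #|R|.
Proof.
move=> indP indg; pose h x := (upd x w (g x), x w).
have inj_h : {in P &, injective h}.
  move=> x y _ _ [Exy Ewy].
  rewrite -(upd_id x w) -(upd_id y w) -(upd_upd x w (g x)) -(upd_upd y w (g y)).
  by rewrite Exy Ewy.
rewrite -(card_in_imset inj_h) -cardsT -cardsX.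
suff -> : h @: P = setX [set x in P | g x == x w] setT by [].
apply/setP => -[y k]; rewrite inE /= !inE andbT.
apply/imsetP/andP => [[x xP [-> _]] | [yP /eqP gy]].
  by rewrite indP indg upd_at.
by exists (upd y w k); rewrite ?indP // /h indg upd_upd gy upd_id upd_at.
Qed.

Lemma card_moved_coord (P : {set X}) (g : X -> R) (w : V) :
  indep_of w (fun x => x \in P) -> indep_of w g ->
  #|[set x in P | g x != x w]| * #|R| = #|P| * #|R|.-1.
Proof.
move=> indP indg; have fixed := card_fixed_coord indP indg.
have split : #|[set x in P | g x == x w]| + #|[set x in P | g x != x w]| = #|P|.
  rewrite -(cardsID [set x | g x == x w] P).
  by congr (_ + _); apply: eq_card => x; rewrite !inE // andbC.
move: fixed split; case: #|R| => [|r] /=; lia.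
Qed.

End CoordinateUpdate.

Lemma card_bigcup_le (I T : finType) (P : {pred I}) (F : I -> {set T}) :
  #|\bigcup_(i in P) F i| <= \sum_(i in P) #|F i|.
Proof.
elim/big_rec2: _ => [|i n A _ IH]; first by rewrite cards0.
by rewrite (leq_trans (leq_card_setU _ _)) // leq_add2l.
Qed.

Section PeriodicPoints.
Variables (A : finType) (s : A -> A).

Lemma eventually_periodic (x : A) :
  exists i k, 0 < k /\ iter k s (iter i s x) = iter i s x.
Proof.
have /trajectP[i lt_i_n loop] := looping_order s x.
exists i, (order s x - i); rewrite subn_gt0 lt_i_n -iterD subnK ?loop //.
exact: ltnW.
Qed.

Lemma fcycle_traject (y : A) (k : nat) :
  0 < k -> iter k s y = y -> fcycle s (traject s y k).
Proof.
case: k => // k _ period.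
rewrite trajectS /= -[X in rcons _ X]period iterSr -trajectSr.
exact: fpath_traject.
Qed.

End PeriodicPoints.

Section AcyclicSets.
Variables (V : finType) (e : rel V).

Lemma induced_acyclic_sub (S T : {set V}) :
  induced_acyclic e S -> T \subset S -> induced_acyclic e T.
Proof.
move=> acS /subsetP TS [x [p [cyc allT]]]; apply: acS; exists x, p; split => //.
by apply/allP => y /(allP allT)/TS.
Qed.

(* If some map s sends every vertex of T along an arc to a vertex of T, then
   T contains a directed cycle (the orbit of a periodic point of s). *)
Lemma successor_cycle (T : {set V}) (s : V -> V) (x0 : V) :
  x0 \in T -> {in T, forall w, (s w \in T) && e w (s w)} -> has_cycle_in e T.
Proof.
move=> x0T succ.
have iterT i : iter i s x0 \in T.
  by elim: i => [|i IH] //=; case/andP: (succ _ IH).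
have [i [k [k_gt0 period]]] := eventually_periodic s x0.
have trajT : all [pred y | y \in T] (traject s (iter i s x0) k).
  by apply/allP => _ /trajectP[j _ ->]; rewrite /= -iterD iterT.
have cyc : cycle e (traject s (iter i s x0) k).
  apply: (sub_in_cycle _ trajT (fcycle_traject k_gt0 period)) => w v wT _ /eqP <-.
  by case/andP: (succ _ wT).
move: cyc trajT; case: k k_gt0 {period} => // k _.
by exists (iter i s x0), (traject s (s (iter i s x0)) k).
Qed.

Lemma acyclic_sink (T : {set V}) :
  induced_acyclic e T -> T != set0 ->
  exists2 w, w \in T & forall v, v \in T -> ~~ e w v.
Proof.
move=> acT /set0Pn[x0 x0T].
case: (boolP [exists w in T, [forall v in T, ~~ e w v]]).
  by case/existsP => w /andP[wT /forall_inP sink]; exists w.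
rewrite negb_exists_in => /forall_inP nosink; exfalso; apply: acT.
pose s w := if [pick v in T | e w v] is Some v then v else w.
apply: (successor_cycle (s := s) x0T) => w wT; rewrite /s.
case: pickP => [v /andP[-> ->] //|none].
have := nosink w wT; rewrite negb_forall_in => /existsP[v /andP[vT /negPn evw]].
by have := none v; rewrite vT evw.
Qed.

End AcyclicSets.

Section AvoidingConfigurations.
Variables (q : nat) (V : finType) (e : rel V).
Variable f : V -> {ffun V -> 'I_q} -> 'I_q.
Hypotheses (irr : irreflexive e) (Dfun : is_D_function e f).

Definition unfixed_on (T : {set V}) : {set {ffun V -> 'I_q}} :=
  [set x | [forall v in T, f v x != x v]].

Lemma card_configs : #|{ffun V -> 'I_q}| = q ^ #|V|.
Proof. by rewrite card_ffun card_ord. Qed.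

(* f_v ignores x_w unless w is an in-neighbour of v; in particular f_v
   ignores x_v, as D has no loops. *)
Lemma f_indep_of (w v : V) : ~~ e w v -> indep_of w (f v).
Proof.
move=> no_arc x k; apply: Dfun => u; rewrite inE ffunE => e_uv.
by case: eqP => // u_w; rewrite -u_w e_uv in no_arc.
Qed.

Lemma f_indep_of_self (v : V) : indep_of v (f v).
Proof. by apply: f_indep_of; rewrite irr. Qed.

Lemma unfixed_indep_of (T : {set V}) (w : V) :
  w \notin T -> (forall v, v \in T -> ~~ e w v) ->
  indep_of w (fun x => x \in unfixed_on T).
Proof.
move=> wT no_arc x k; rewrite !inE; apply: eq_forallb_in => v vT.
have v_w : (v == w) = false by apply: contraNF wT => /eqP <-.
by rewrite ffunE v_w (f_indep_of (no_arc v vT)).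
Qed.

Lemma card_unfixed_acyclic (T : {set V}) :
  induced_acyclic e T -> #|unfixed_on T| * q ^ #|T| = q ^ #|V| * q.-1 ^ #|T|.
Proof.
move: {2}#|T| (erefl #|T|) => n; elim: n T => [|n IH] T cardT acT.
  rewrite cardT !expn0 !muln1 -card_configs -cardsT.
  apply: eq_card => x; rewrite !inE (cards0_eq cardT).
  by apply/forall_inP => v; rewrite inE.
have [w wT sink] : exists2 w, w \in T & forall v, v \in T -> ~~ e w v.
  by apply: acyclic_sink => //; rewrite -card_gt0 cardT.
have cardTw : #|T :\ w| = n by move: cardT; rewrite (cardsD1 w T) wT => -[].
have acTw : induced_acyclic e (T :\ w).
  exact: induced_acyclic_sub acT (subD1set T w).
have splitT : unfixed_on T = [set x in unfixed_on (T :\ w) | f w x != x w].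
  apply/setP => x; rewrite !inE.
  apply/forall_inP/andP => [unfT | [/forall_inP unfTw fw] v vT].
    by split; [apply/forall_inP => v /setD1P[_ /unfT] | apply: unfT].
  by case: (eqVneq v w) => [-> // | v_w]; apply: unfTw; apply/setD1P.
have Tw_indep : indep_of w (fun x => x \in unfixed_on (T :\ w)).
  by apply: unfixed_indep_of => [|v /setD1P[_ /sink]//]; rewrite !inE eqxx.
have := card_moved_coord Tw_indep (f_indep_of_self w).
rewrite card_ord -splitT => moved.
rewrite cardT -cardTw !expnS mulnA moved mulnAC (IH _ cardTw acTw).
by rewrite -mulnA (mulnC (q.-1 ^ _)).
Qed.

Definition fixed_at (v : V) : {set {ffun V -> 'I_q}} := [set x | f v x == x v].

(* Since f_v ignores x_v, a 1/q fraction of all configurations is fixed at v. *)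
Lemma card_fixed_at (v : V) : #|fixed_at v| * q = q ^ #|V|.
Proof.
have all_indep : indep_of v (fun x => x \in [set: {ffun V -> 'I_q}]).
  by move=> x k; rewrite !inE.
have := card_fixed_coord all_indep (f_indep_of_self v).
rewrite cardsT card_configs card_ord => ->; congr (_ * _).
by apply: eq_card => x; rewrite !inE.
Qed.

Hypothesis solvable : forall x, exists v, f v x = x v.

Lemma unfixed_sub_cover (S : {set V}) :
  unfixed_on S \subset \bigcup_(v in ~: S) fixed_at v.
Proof.
apply/subsetP => x; rewrite inE => /forall_inP unfS.
have [v fix_v] := solvable x; apply/bigcupP; exists v; last by rewrite inE fix_v.
by rewrite inE; apply/negP => /unfS; rewrite fix_v eqxx.
Qed.

Lemma card_unfixed_le (S : {set V}) : #|unfixed_on S| * q <= #|~: S| * q ^ #|V|.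
Proof.
rewrite -[X in _ <= X]sum_nat_const.
under eq_bigr => v _ do rewrite -(card_fixed_at v).
rewrite -big_distrl leq_mul2r; apply/orP; right.
exact: leq_trans (subset_leq_card (unfixed_sub_cover S)) (card_bigcup_le _ _).
Qed.

End AvoidingConfigurations.

(* The hypothesis of the theorem, cleared of denominators. *)
Lemma ratio_bound (R : numFieldType) (q I m : nat) : 1 < q ->
  (m%:R * ((q%:R / q.-1%:R) ^+ I) < (q%:R : R))%R -> m * q ^ I < q.-1 ^ I * q.
Proof.
move=> q_gt1; have q1_gt0 : 0 < q.-1 by case: q q_gt1 => [|[]].
rewrite expr_div_n -!natrX mulrA ltr_pdivrMr ?ltr0n ?expn_gt0 ?q1_gt0 //.
by rewrite -!natrM ltr_nat (mulnC q).
Qed.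

Theorem theorem13 (q : nat) (V : finType) (e : rel V) (S : {set V}) :
  (2 <= q)%N -> irreflexive e -> induced_acyclic e S ->
  ((#|V| - #|S|)%:R * ((q%:R / (q.-1)%:R) ^+ #|S|) < (q%:R : rat))%R ->
  ~ q_solvable e q.
Proof.
move=> q_ge2 irr acS ineq [f [Dfun solvable]].
have count := card_unfixed_acyclic irr Dfun acS.
have cover := card_unfixed_le irr Dfun solvable S.
have cardC : #|~: S| = #|V| - #|S| by rewrite -(cardsC S) addKn.
suff : q ^ #|V| * (q.-1 ^ #|S| * q) <= q ^ #|V| * ((#|V| - #|S|) * q ^ #|S|).
  by rewrite leq_pmul2l ?expn_gt0 ?(ltnW q_ge2) // leqNgt (ratio_bound q_ge2 ineq).
rewrite mulnA -count mulnAC (leq_trans (leq_mul cover (leqnn (q ^ #|S|)))) //.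
by rewrite cardC mulnAC mulnC.
Qed.
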